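(* Let $R$ be a ring with identity, ${}_RM$ a left $R$-module, $\varphi:M\to M$ a nilpotent $R$-endomorphism, and $\{x_{\gamma,i}\mid\gamma\in\Gamma,1\le i\le k_\gamma\}$ a nilpotent Jordan normal base of ${}_RM$ with respect to $\varphi$. Define $\Phi:\coprod_{\gamma\in\Gamma}R[t]\to M$ by $\Phi(\mathbf f)=\sum_{\gamma\in\Gamma}f_\gamma(t)\ast x_{\gamma,1}$ for $\mathbf f=(f_\gamma(t))_{\gamma\in\Gamma}$. Then $\Phi$ is a surjective homomorphism of left $R[t]$-modules, $\varphi(\Phi(\mathbf f))=\Phi(t\mathbf f)$ for all $\mathbf f\in\coprod_{\gamma\in\Gamma}R[t]$, and \[\coprod_{\gamma\in\Gamma}\bigl(J(R)[t]+(t^{k_\gamma})\bigr)\subseteq\ker(\Phi),\] where the left-hand side is the set of $\mathbf f$ in the copower with $f_\gamma(t)\in J(R)[t]+(t^{k_\gamma})$ for every $\gamma$; moreover $\ker(\Phi)$ is a left ideal of the direct power ring $\prod_{\gamma\in\Gamma}R[t]$ (i.e. $\mathbf g\mathbf f\in\ker(\Phi)$ for all $\mathbf g\in\prod_{\gamma}R[t]$ and $\mathbf f\in\ker(\Phi)$), and hence of the copower ring.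
   Context: A nilpotent Jordan normal base of ${}_RM$ with respect to $\varphi$ is a subset $\{x_{\gamma,i}\mid\gamma\in\Gamma,1\le i\le k_\gamma\}$ (integers $k_\gamma\ge1$) such that each $Rx_{\gamma,i}$ is simple, $M=\bigoplus_{\gamma,i}Rx_{\gamma,i}$, $\varphi(x_{\gamma,i})=x_{\gamma,i+1}$ for $1\le i<k_\gamma$, $\varphi(x_{\gamma,k_\gamma})=0$, and $\{k_\gamma\}$ is bounded. $R[t]$ is the polynomial ring in a central (commuting) indeterminate $t$; $J(R)$ is the Jacobson radical and $J(R)[t]$ the polynomials with coefficients in $J(R)$; $(t^k)=R[t]t^k$. $M$ is a left $R[t]$-module via $(a_1+a_2t+\cdots+a_{n+1}t^n)\ast u=a_1u+a_2\varphi(u)+\cdots+a_{n+1}\varphi^n(u)$. The copower $\coprod_{\gamma\in\Gamma}R[t]$ is the ideal of the direct power ring $\prod_{\gamma\in\Gamma}R[t]$ consisting of elements with finitely many nonzero coordinates; $R[t]$ acts on both by left multiplication in each coordinate. *)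

From HB Require Import structures.
From mathcomp Require Import all_boot all_order all_algebra.
From mathcomp Require Import finmap boolp classical_sets functions cardinality fsbigop.
Set Implicit Arguments. Unset Strict Implicit. Unset Printing Implicit Defensive.
Import Order.TTheory GRing.Theory.
Local Open Scope classical_set_scope.
Local Open Scope ring_scope.

Definition left_ideal (R : nzRingType) (I : set R) : Prop :=
  I 0 /\ (forall a b, I a -> I b -> I (a + b)) /\ (forall r a, I a -> I (r * a)).

Definition maximal_left_ideal (R : nzRingType) (I : set R) : Prop :=
  left_ideal I /\ ~ I 1 /\
  (forall I' : set R, left_ideal I' -> I `<=` I' -> I' = I \/ I' 1).

Definition jacobson (R : nzRingType) : set R :=
  [set a | forall I : set R, maximal_left_ideal I -> I a].

(* J(R)[t] + (t^k) inside R[t], where (t^k) = R[t] t^k. *)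
Definition jac_plus_tpow (R : nzRingType) (k : nat) : set {poly R} :=
  [set p | exists (a b : {poly R}),
      (forall i, @jacobson R a`_i) /\ p = a + b * 'X^k].

Definition submodule (R : nzRingType) (M : lmodType R) (S : set M) : Prop :=
  S 0 /\ (forall u v, S u -> S v -> S (u + v)) /\ (forall (r : R) u, S u -> S (r *: u)).

Definition cyclic_sub (R : nzRingType) (M : lmodType R) (x : M) : set M :=
  [set y | exists r : R, y = r *: x].

Definition simple_cyclic (R : nzRingType) (M : lmodType R) (x : M) : Prop :=
  cyclic_sub x <> [set 0] /\
  (forall S : set M, submodule S -> S `<=` cyclic_sub x ->
     S = [set 0] \/ S = cyclic_sub x).

Definition jindex (Γ : Type) (k : Γ -> nat) : set {classic (Γ * nat)%type} :=
  [set p | (1 <= p.2 <= k p.1)%N].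

Definition fin_family (R : nzRingType) (M : lmodType R) (Γ : Type) (k : Γ -> nat)
  (x : Γ -> nat -> M) (c : Γ -> nat -> R) : Prop :=
  finite_set (jindex k `&` [set p | c p.1 p.2 *: x p.1 p.2 != 0]).

Definition family_sum (R : nzRingType) (M : lmodType R) (Γ : Type) (k : Γ -> nat)
  (x : Γ -> nat -> M) (c : Γ -> nat -> R) : M :=
  \sum_(p \in jindex k) (c p.1 p.2 *: x p.1 p.2).

(* M is the (internal) direct sum of the submodules R x_{gamma,i}. *)
Definition direct_sum_decomp (R : nzRingType) (M : lmodType R) (Γ : Type)
  (k : Γ -> nat) (x : Γ -> nat -> M) : Prop :=
  (forall m : M, exists c, fin_family k x c /\ m = family_sum k x c) /\
  (forall c, fin_family k x c -> family_sum k x c = 0 ->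
     forall p, jindex k p -> c p.1 p.2 *: x p.1 p.2 = 0).

Definition nilpotent_endo (R : nzRingType) (M : lmodType R) (phi : M -> M) : Prop :=
  exists n : nat, forall u, iter n phi u = 0.

(* Nilpotent Jordan normal base {x_{gamma,i} | gamma in Γ, 1 <= i <= k gamma}
   (indices i are 1-based, as in the paper). *)
Definition nilpotent_jordan_base (R : nzRingType) (M : lmodType R) (phi : M -> M)
  (Γ : Type) (k : Γ -> nat) (x : Γ -> nat -> M) : Prop :=
  (forall g, (1 <= k g)%N) /\
  (forall g i, (1 <= i <= k g)%N -> simple_cyclic (x g i)) /\
  direct_sum_decomp k x /\
  (forall g i, (1 <= i < k g)%N -> phi (x g i) = x g i.+1) /\
  (forall g, phi (x g (k g)) = 0) /\
  (exists N : nat, forall g, (k g <= N)%N).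

Definition tact (R : nzRingType) (M : lmodType R) (phi : M -> M)
  (f : {poly R}) (u : M) : M :=
  \sum_(i < size f) (f`_i *: iter i phi u).

Definition in_copower (R : nzRingType) (Γ : Type) (f : Γ -> {poly R}) : Prop :=
  finite_set [set g | f g != 0].

Definition PhiJ (R : nzRingType) (M : lmodType R) (phi : M -> M) (Γ : Type)
  (x : Γ -> nat -> M) (f : Γ -> {poly R}) : M :=
  \sum_(g \in [set: {classic Γ}]) tact phi (f g) (x g 1%N).

(* Since x_{γ,1} generates the γ-th Jordan chain, t^i acts on it by φ^i, so f_γ(t) ∗ x_{γ,1} is
   the element of the chain with coordinates given by the coefficients of f_γ below degree k_γ.
   Hence Φ is the direct sum of the coordinate maps, which gives surjectivity, and Φ f = 0 forces
   every summand f_γ(t) ∗ x_{γ,1} to vanish, so ker Φ is stable under coordinatewise left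
   multiplication. Polynomials in J(R)[t] + (t^{k_γ}) kill x_{γ,1}: t^{k_γ} because the chain
   has length k_γ, and J(R) because it annihilates every simple module, the annihilator of a
   generator of a simple module being a maximal left ideal. *)
From HB Require Import structures.
From mathcomp Require Import all_boot all_order all_algebra.
From mathcomp Require Import finmap boolp classical_sets functions cardinality fsbigop.
Set Implicit Arguments. Unset Strict Implicit. Unset Printing Implicit Defensive.
Import GRing.Theory.
Local Open Scope classical_set_scope.
Local Open Scope ring_scope.

Lemma big_ord_widen_eq0 (V : nmodType) (a m : nat) (F : nat -> V) : (a <= m)%N ->
  (forall i, (a <= i < m)%N -> F i = 0) ->
  \sum_(i < a) F i = \sum_(i < m) F i.
Proof.
move=> am F0; rewrite (big_ord_widen _ _ am) [RHS](bigID (fun i : 'I_m => (i < a)%N)) /=.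
rewrite [X in _ = _ + X]big1 ?addr0 // => i; rewrite -leqNgt => ai.
by apply: F0; rewrite ai ltn_ord.
Qed.

Section PolynomialAction.
Variables (R : nzRingType) (M : lmodType R) (phi : {linear M -> M}).

Lemma iter_linD i (u v : M) : iter i phi (u + v) = iter i phi u + iter i phi v.
Proof. by elim: i => //= i ->; rewrite linearD. Qed.

Lemma iter_lin0 i : iter i phi (0 : M) = 0.
Proof. by elim: i => //= i ->; rewrite linear0. Qed.

Lemma iter_linZ i (r : R) (v : M) : iter i phi (r *: v) = r *: iter i phi v.
Proof. by elim: i => //= i ->; rewrite linearZZ. Qed.

Lemma tact_widen n (p : {poly R}) (u : M) :
  (forall i, (n <= i)%N -> p`_i *: iter i phi u = 0) ->
  tact phi p u = \sum_(i < n) p`_i *: iter i phi u.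
Proof.
move=> p0; pose F i := p`_i *: iter i phi u; set m := maxn n (size p).
have -> : tact phi p u = \sum_(i < m) F i.
  apply: big_ord_widen_eq0; first exact: leq_maxr.
  by move=> i /andP[pi _]; rewrite /F nth_default // scale0r.
by symmetry; apply: big_ord_widen_eq0 => [|i /andP[/p0]]; rewrite ?leq_maxl.
Qed.

Lemma tact_size_le n (p : {poly R}) (u : M) : (size p <= n)%N ->
  tact phi p u = \sum_(i < n) p`_i *: iter i phi u.
Proof.
by move=> pn; apply: tact_widen => i ni; rewrite nth_default ?scale0r ?(leq_trans pn).
Qed.

Lemma tact0l (u : M) : tact phi 0 u = 0.
Proof. by rewrite /tact size_poly0 big_ord0. Qed.

Lemma tact0r (p : {poly R}) : tact phi p 0 = 0.
Proof. by rewrite /tact big1 // => i _; rewrite iter_lin0 scaler0. Qed.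

Lemma tactDl (p q : {poly R}) (u : M) :
  tact phi (p + q) u = tact phi p u + tact phi q u.
Proof.
rewrite !(@tact_size_le (maxn (size p) (size q))) ?leq_maxl ?leq_maxr ?size_polyD //.
by rewrite -big_split /=; apply: eq_bigr => i _; rewrite coefD scalerDl.
Qed.

Lemma tactDr (p : {poly R}) (u v : M) :
  tact phi p (u + v) = tact phi p u + tact phi p v.
Proof.
by rewrite /tact -big_split /=; apply: eq_bigr => i _; rewrite iter_linD scalerDr.
Qed.

Lemma tact_sumr (p : {poly R}) (I : Type) (r : seq I) (F : I -> M) :
  tact phi p (\sum_(i <- r) F i) = \sum_(i <- r) tact phi p (F i).
Proof.
elim: r => [|a r IH]; first by rewrite !big_nil tact0r.
by rewrite !big_cons tactDr IH.
Qed.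

Lemma phi_tact (p : {poly R}) (u : M) : phi (tact phi p u) = tact phi p (phi u).
Proof.
by rewrite /tact linear_sum; apply: eq_bigr => i _; rewrite linearZZ -iterS iterSr.
Qed.

Lemma tactMX (q : {poly R}) (u : M) : tact phi (q * 'X) u = tact phi q (phi u).
Proof.
rewrite (@tact_size_le (size q).+1); last first.
  by rewrite (leq_trans (size_polyMleq _ _)) // size_polyX addn2.
rewrite big_ord_recl /= coefMX eqxx scale0r add0r (@tact_size_le (size q)) //.
by apply: eq_bigr => i _; rewrite coefMX /= add0n -iterS iterSr.
Qed.

Lemma tactCM (c : R) (q : {poly R}) (u : M) :
  tact phi (c%:P * q) u = c *: tact phi q u.
Proof.
rewrite (@tact_size_le (size q)); last by rewrite mul_polyC size_scale_leq.
by rewrite /tact scaler_sumr; apply: eq_bigr => i _; rewrite coefCM scalerA.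
Qed.

Lemma tactC (c : R) (u : M) : tact phi c%:P u = c *: u.
Proof.
by rewrite (@tact_size_le 1) ?size_polyC ?leq_b1 // big_ord1 coefC.
Qed.

Lemma tactM (p q : {poly R}) (u : M) :
  tact phi (p * q) u = tact phi p (tact phi q u).
Proof.
elim/poly_ind: p q => [|p c IH] q; first by rewrite mul0r !tact0l.
rewrite mulrDl -mulrA -(commr_polyX q) mulrA.
by rewrite tactDl tactCM -mulrA IH tactMX tactDl tactMX tactC phi_tact.
Qed.

Lemma tactXn n (u : M) : tact phi 'X^n u = iter n phi u.
Proof.
elim: n u => [|n IH] u; first by rewrite expr0 -polyC1 tactC scale1r.
by rewrite exprSr tactMX IH iterSr.
Qed.

Lemma tactX (u : M) : tact phi 'X u = phi u.
Proof. exact: (tactXn 1). Qed.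

End PolynomialAction.

Lemma annihilator_maximal (R : nzRingType) (M : lmodType R) (x0 : M) :
  simple_cyclic x0 -> maximal_left_ideal [set r : R | r *: x0 = 0].
Proof.
move=> [x0_neq0 x0_simple]; set I := [set r : R | r *: x0 = 0].
split; [split; [|split] | split].
- by rewrite /I /= scale0r.
- by move=> a b; rewrite /I /= => Ia Ib; rewrite scalerDl Ia Ib addr0.
- by move=> r a; rewrite /I /= => Ia; rewrite -scalerA Ia scaler0.
- rewrite /I /= scale1r => x0_eq0; apply: x0_neq0; rewrite x0_eq0.
  apply/seteqP; split=> y /=; first by move=> [r ->]; rewrite scaler0.
  by move=> ->; exists 0; rewrite scaler0.
move=> I' [I'0 [I'D I'M]] II'.
pose S := [set y : M | exists r, I' r /\ y = r *: x0].
have S_sub : submodule S.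
  split; first by exists 0; rewrite scale0r.
  split; first by move=> u v [a [Ia ->]] [b [Ib ->]]; exists (a + b); rewrite scalerDl; split=> //; apply: I'D.
  by move=> r u [a [Ia ->]]; exists (r * a); rewrite scalerA; split=> //; apply: I'M.
have S_cyclic : S `<=` cyclic_sub x0 by move=> y [r [_ ->]]; exists r.
case: (x0_simple S S_sub S_cyclic) => [S0|Sx0].
- left; apply/seteqP; split=> r Ir //; last exact: II'.
  have : S (r *: x0) by exists r.
  by rewrite S0.
- right; have [r [I'r x0E]] : S x0 by rewrite Sx0; exists 1; rewrite scale1r.
  have I1r : I (1 - r) by rewrite /I /= scalerBl scale1r -x0E subrr.
  by rewrite -(subrK r 1); apply: I'D => //; apply: II'.
Qed.

Lemma jacobsonZ_simple (R : nzRingType) (M : lmodType R) (x0 : M) (j : R) :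
  simple_cyclic x0 -> jacobson j -> j *: x0 = 0.
Proof. by move=> /annihilator_maximal x0_max /(_ _ x0_max). Qed.

Section PhiJ.
Variables (R : nzRingType) (M : lmodType R) (phi : {linear M -> M})
  (Γ : Type) (x : Γ -> nat -> M).
Implicit Types (f g : Γ -> {poly R}) (G : set {classic Γ}).

Lemma PhiJ_fsbig f G : [set c | f c != 0] `<=` G ->
  PhiJ phi x f = \sum_(c \in G) tact phi (f c) (x c 1%N).
Proof.
move=> fG; rewrite /PhiJ -(fsbig_widen G) //.
move=> c [_ Gc] /=; case: (f c =P 0) => [->|/eqP fc]; first by rewrite tact0l.
by case: Gc; apply: fG.
Qed.

Lemma PhiJ_support f G : finite_set G -> [set c | f c != 0] `<=` G ->
  PhiJ phi x f = \sum_(c <- fset_set G) tact phi (f c) (x c 1%N).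
Proof. by move=> finG /PhiJ_fsbig ->; rewrite fsbig_finite. Qed.

Lemma PhiJ_eq0 f : (forall c, tact phi (f c) (x c 1%N) = 0) -> PhiJ phi x f = 0.
Proof. by move=> f0; rewrite /PhiJ fsbig1. Qed.

Lemma PhiJ0 : PhiJ phi x (fun _ => 0) = 0.
Proof. by apply: PhiJ_eq0 => c; rewrite tact0l. Qed.

Lemma PhiJD f g : in_copower f -> in_copower g ->
  PhiJ phi x (fun c => f c + g c) = PhiJ phi x f + PhiJ phi x g.
Proof.
move=> cf cg; set G := [set c | f c != 0] `|` [set c | g c != 0].
have finG : finite_set G by rewrite finite_setU.
have fgG : [set c | f c + g c != 0] `<=` G.
  move=> c /= fg; apply: contrapT => /not_orP[/negP/negPn/eqP f0 /negP/negPn/eqP g0].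
  by move: fg; rewrite f0 g0 addr0 eqxx.
rewrite !(@PhiJ_support _ G) //; last 2 first.
- by move=> c; right.
- by move=> c; left.
by rewrite -big_split; apply: eq_bigr => c _; rewrite tactDl.
Qed.

Lemma PhiJ_tactM (h : {poly R}) f : in_copower f ->
  PhiJ phi x (fun c => h * f c) = tact phi h (PhiJ phi x f).
Proof.
move=> cf; rewrite !(@PhiJ_support _ [set c | f c != 0]) //; last first.
  by move=> c /=; apply: contraNneq => ->; rewrite mulr0.
by rewrite tact_sumr; apply: eq_bigr => c _; rewrite tactM.
Qed.

Lemma phi_PhiJ f : in_copower f -> phi (PhiJ phi x f) = PhiJ phi x (fun c => 'X * f c).
Proof. by move=> cf; rewrite PhiJ_tactM // tactX. Qed.

Lemma PhiJ_mull_eq0 g f : (forall c, tact phi (f c) (x c 1%N) = 0) ->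
  PhiJ phi x (fun c => g c * f c) = 0.
Proof. by move=> f0; apply: PhiJ_eq0 => c; rewrite tactM f0 tact0r. Qed.

End PhiJ.

Section JordanBase.
Variables (R : nzRingType) (M : lmodType R) (phi : {linear M -> M})
  (Γ : Type) (k : Γ -> nat) (x : Γ -> nat -> M).
Hypothesis x_base : nilpotent_jordan_base phi k x.
Implicit Types (f : Γ -> {poly R}) (G : set {classic Γ}).

Lemma jordan_length_bounded : exists N, forall c, (k c <= N)%N.
Proof. by case: x_base => _ [_ [_ [_ [_ kN]]]]. Qed.

Lemma iter_jordan_head c i : (i < k c)%N -> iter i phi (x c 1%N) = x c i.+1.
Proof.
case: x_base => _ [_ [_ [phi_x _]]].
by elim: i => [//|i IH] ik /=; rewrite IH ?(ltnW ik) // phi_x // ik andbT.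
Qed.

Lemma iter_jordan_head_eq0 c i : (k c <= i)%N -> iter i phi (x c 1%N) = 0.
Proof.
case: x_base => k_gt0 [_ [_ [_ [phi_xk _]]]].
move=> /subnK <-; rewrite iterD.
suff -> : iter (k c) phi (x c 1%N) = 0 by rewrite iter_lin0.
have := k_gt0 c; case kE: (k c) => [//|n] _.
by rewrite iterS iter_jordan_head ?kE // -kE phi_xk.
Qed.

Lemma tact_jordan_head c (p : {poly R}) N : (k c <= N)%N ->
  tact phi p (x c 1%N) = \sum_(i < N) (if (i < k c)%N then p`_i *: x c i.+1 else 0).
Proof.
move=> kN; rewrite (@tact_widen _ _ _ N); last first.
  by move=> i Ni; rewrite iter_jordan_head_eq0 ?scaler0 // (leq_trans kN).
apply: eq_bigr => i _; case: ifP => ik; first by rewrite iter_jordan_head.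
by rewrite iter_jordan_head_eq0 ?scaler0 // leqNgt ik.
Qed.

Lemma fin_family_coef f G N : finite_set G -> [set c | f c != 0] `<=` G ->
  (forall c, (k c <= N)%N) -> fin_family k x (fun c j => (f c)`_j.-1).
Proof.
move=> finG fG kN; apply: (@sub_finite_set _ _ (G `*` `I_N.+1)).
  move=> [c j] [/= /andP[j1 jk] nz]; split => /=; last by rewrite ltnS (leq_trans jk).
  by apply: fG => /=; apply: contra_neq nz => ->; rewrite coef0 scale0r.
exact/finite_setX/finite_II.
Qed.

Lemma PhiJ_family_sum f G N : finite_set G -> [set c | f c != 0] `<=` G ->
  (forall c, (k c <= N)%N) ->
  PhiJ phi x f = family_sum k x (fun c j => (f c)`_j.-1).
Proof.
move=> finG fG kN.
pose F c j := if (1 <= j <= k c)%N then (f c)`_j.-1 *: x c j else 0.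
have -> : PhiJ phi x f = \sum_(c \in G) \sum_(j \in `I_N.+1) F c j.
  rewrite (PhiJ_fsbig phi x fG); apply: eq_fsbigr => c _.
  by rewrite -fsbig_ord big_ord_recl (@tact_jordan_head c _ N) // /F /= add0r.
rewrite pair_fsbig // /family_sum fsbig_mkcond [RHS]fsbig_mkcond.
rewrite (reindex_fsbigT (id : {classic (Γ * nat)} -> ({classic Γ} * nat)%type)); last by exists id.
apply: eq_fsbigr => -[c j] _; rewrite /patch /F /=.
have [cj|cj] := pselect (jindex k (c, j)); last first.
  by rewrite (memNset cj); move: cj; rewrite /jindex /= => /negP/negbTE ->; case: ifP.
rewrite (mem_set cj); move: (cj); rewrite /jindex /= => /andP[j1 jk]; rewrite j1 jk.
have [GNcj|GNcj] := pselect ((G `*` `I_N.+1) (c, j)); first by rewrite (mem_set GNcj).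
rewrite (memNset GNcj); apply: contrapT => /eqP nz; apply: GNcj; split => /=.
  by apply: fG => /=; apply: contra_neq nz => ->; rewrite coef0 scale0r.
by rewrite ltnS (leq_trans jk).
Qed.

Lemma PhiJ_ker_coord f : in_copower f -> PhiJ phi x f = 0 ->
  forall c, tact phi (f c) (x c 1%N) = 0.
Proof.
move=> cf Phif0 c; have [N kN] := jordan_length_bounded.
have fam_f := @fin_family_coef f _ N cf (@subset_refl _ _) kN.
rewrite (@PhiJ_family_sum f _ N cf (@subset_refl _ _) kN) in Phif0.
case: x_base => _ [_ [[_ x_indep] _]].
rewrite (@tact_jordan_head c _ N (kN c)) big1 // => i _; case: ifP => // ik.
by apply: (x_indep _ fam_f Phif0 (c, i.+1)); rewrite /jindex /= ik.
Qed.

Lemma tact_jordan_head_jac c (p : {poly R}) : jac_plus_tpow (k c) p ->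
  tact phi p (x c 1%N) = 0.
Proof.
move=> [a [b [Ja ->]]]; case: x_base => k_gt0 [x_simple _].
have xc_simple : simple_cyclic (x c 1%N) by apply: x_simple; rewrite /= k_gt0.
rewrite tactDl tactM tactXn iter_jordan_head_eq0 // tact0r addr0 /tact big1 // => i _.
by rewrite -iter_linZ jacobsonZ_simple // iter_lin0.
Qed.

Lemma PhiJ_surjective m : exists f, in_copower f /\ PhiJ phi x f = m.
Proof.
have [N kN] := jordan_length_bounded.
case: x_base => _ [_ [[x_span _] _]]; have [a [fam_a ->]] := x_span m.
pose S : set {classic (Γ * nat)} := jindex k `&` [set p | a p.1 p.2 *: x p.1 p.2 != 0].
pose f c : {poly R} := \poly_(i < N) (if (c, i.+1) \in S then a c i.+1 else 0).
have fS : [set c | f c != 0] `<=` fst @` S.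
  move=> c /= fc; apply: contrapT => Sc; move: fc; apply/negP; rewrite negbK.
  apply/eqP/polyP => i; rewrite coef_poly coef0.
  case: ifP => // _; case: ifP => // /set_mem Sci.
  by case: Sc; exists (c, i.+1).
have finS : finite_set (fst @` S) by apply: finite_image.
exists f; split; first exact: (sub_finite_set fS finS).
rewrite (@PhiJ_family_sum f _ N finS fS kN); apply: eq_fsbigr => -[c j] /set_mem cj /=.
move: (cj); rewrite /jindex /= => /andP[j1 jk].
rewrite coef_poly prednK // (leq_trans jk) //.
have [Scj|Scj] := pselect (S (c, j)); first by rewrite (mem_set Scj).
rewrite (memNset Scj) scale0r; apply: contrapT => /eqP; rewrite eq_sym => nz.
by apply: Scj; split.
Qed.

End JordanBase.

Theorem theorem3p1 (R : nzRingType) (M : lmodType R) (phi : {linear M -> M})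
  (Γ : Type) (k : Γ -> nat) (x : Γ -> nat -> M) :
  nilpotent_endo phi ->
  nilpotent_jordan_base phi k x ->
  let Phi := PhiJ phi x in
  (* Phi is a homomorphism of left R[t]-modules *)
  (forall f g : Γ -> {poly R}, in_copower f -> in_copower g ->
     Phi (fun c => f c + g c) = Phi f + Phi g) /\
  (forall (h : {poly R}) (f : Γ -> {poly R}), in_copower f ->
     Phi (fun c => h * f c) = tact phi h (Phi f)) /\
  (* Phi is surjective *)
  (forall m : M, exists f : Γ -> {poly R}, in_copower f /\ Phi f = m) /\
  (* phi (Phi f) = Phi (t f) *)
  (forall f : Γ -> {poly R}, in_copower f ->
     phi (Phi f) = Phi (fun c => 'X * f c)) /\
  (* coprod_γ (J(R)[t] + (t^{k_γ})) ⊆ ker Phi *)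
  (forall f : Γ -> {poly R}, in_copower f ->
     (forall c, @jac_plus_tpow R (k c) (f c)) -> Phi f = 0) /\
  (* ker Phi is a left ideal of the direct power ring prod_γ R[t] *)
  (Phi (fun _ => 0) = 0 /\
   (forall f g : Γ -> {poly R}, in_copower f -> in_copower g ->
      Phi f = 0 -> Phi g = 0 -> Phi (fun c => f c + g c) = 0) /\
   (forall g f : Γ -> {poly R}, in_copower f -> Phi f = 0 ->
      Phi (fun c => g c * f c) = 0)) /\
  (* ... and hence of the copower ring *)
  (forall g f : Γ -> {poly R}, in_copower g -> in_copower f -> Phi f = 0 ->
      Phi (fun c => g c * f c) = 0).
Proof.
move=> _ x_base Phi.
have ker_mull g f : in_copower f -> Phi f = 0 -> Phi (fun c => g c * f c) = 0.
  by move=> cf /(PhiJ_ker_coord x_base cf); apply: PhiJ_mull_eq0.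
split; first exact: PhiJD.
split; first exact: PhiJ_tactM.
split; first exact: PhiJ_surjective x_base.
split; first exact: phi_PhiJ.
split.
  by move=> f _ f_jac; apply: PhiJ_eq0 => c; apply: tact_jordan_head_jac x_base _ _ (f_jac c).
split; last by move=> g f _; apply: ker_mull.
split; first exact: PhiJ0.
split; last exact: ker_mull.
by move=> f g cf cg Phif0 Phig0; rewrite /Phi PhiJD // -/Phi Phif0 Phig0 addr0.
Qed.
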